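(* Let $\varphi_1,\dots,\varphi_k\in\mathrm{Cvx}(\mathbb{R}^n)$ satisfy $\varphi_i(x)\ge 0$ for all $1\le i\le k$ and $x\in\mathbb{R}^n$, and let $\lambda_1,\dots,\lambda_k>0$. Define \[ g_1(x)=\inf\Big\{\sum_{i=1}^k\lambda_i\varphi_i(y_i):\ \sum_{i=1}^k\lambda_iy_i=x\Big\},\qquad g_2(x)=\inf\Big\{\max_{1\le i\le k}\varphi_i(y_i):\ \sum_{i=1}^k\lambda_iy_i=x\Big\}, \] i.e. $g_1=\lambda_1\cdot\varphi_1\,\square\,\cdots\,\square\,\lambda_k\cdot\varphi_k$ and $g_2=\lambda_1\odot\varphi_1\oplus\cdots\oplus\lambda_k\odot\varphi_k$. Then for every $x\in\mathbb{R}^n$, \[ \Big(\sum_{i}\lambda_i\Big)^{-1}g_1(x)\le g_2(x)\le\big(\min_i\lambda_i\big)^{-1}g_1(x). \]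
   Context: $\mathrm{Cvx}(\mathbb{R}^n)$ is the class of convex lower semicontinuous functions $\varphi:\mathbb{R}^n\to(-\infty,\infty]$. The inf-convolution is $(\varphi\,\square\,\psi)(x)=\inf_y[\varphi(y)+\psi(x-y)]$ with homothety $(\lambda\cdot\varphi)(x)=\lambda\varphi(x/\lambda)$; the operation $\oplus$ is $(\varphi\oplus\psi)(x)=\inf_y\max\{\varphi(y),\psi(x-y)\}$ with homothety $(\lambda\odot\varphi)(x)=\varphi(x/\lambda)$. *)

From HB Require Import structures.
From mathcomp Require Import all_boot all_order all_algebra.
From mathcomp Require Import all_classical all_reals all_analysis.
Set Implicit Arguments. Unset Strict Implicit. Unset Printing Implicit Defensive.
Import Order.TTheory GRing.Theory Num.Theory.
Import numFieldNormedType.Exports.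
Local Open Scope classical_set_scope.
Local Open Scope ring_scope.

(* phi : R^n -> (-oo, +oo], convex and lower semicontinuous (closed sublevel sets). *)
Definition ecvx_fun (R : realType) (n : nat) (phi : 'rV[R]_n -> \bar R) : Prop :=
  (forall x, phi x != -oo%E) /\
  (forall (x y : 'rV[R]_n) (t : R), 0 < t -> t < 1 ->
     (phi (t *: x + (1 - t) *: y)%R <= t%:E * phi x + (1 - t)%:E * phi y)%E) /\
  (forall a : R, closed [set x | (phi x <= a%:E)%E]).

Definition g1 (R : realType) (n k : nat) (lambda : 'I_k -> R)
  (phi : 'I_k -> 'rV[R]_n -> \bar R) (x : 'rV[R]_n) : \bar R :=
  ereal_inf [set (\sum_(i < k) (lambda i)%:E * phi i (y i))%E
            | y in [set y : 'I_k -> 'rV[R]_n | \sum_(i < k) lambda i *: y i = x]].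

Definition g2 (R : realType) (n k : nat) (lambda : 'I_k -> R)
  (phi : 'I_k -> 'rV[R]_n -> \bar R) (x : 'rV[R]_n) : \bar R :=
  ereal_inf [set (\big[maxe/-oo%E]_(i < k) phi i (y i))%E
            | y in [set y : 'I_k -> 'rV[R]_n | \sum_(i < k) lambda i *: y i = x]].

From HB Require Import structures.
From mathcomp Require Import all_boot all_order all_algebra.
From mathcomp Require Import all_classical all_reals all_analysis.
Import Order.TTheory GRing.Theory Num.Theory.
Import numFieldNormedType.Exports.
Set Implicit Arguments. Unset Strict Implicit. Unset Printing Implicit Defensive.
Local Open Scope classical_set_scope.
Local Open Scope ring_scope.

(* Both g1 and g2 are infima over the same set of decompositions
   x = sum_i lambda_i y_i, so it suffices to compare the two objectives
   pointwise: the weighted sum lies between (min_i lambda_i) times the sum of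
   the phi_i(y_i), which dominates their maximum since phi_i >= 0, and
   (sum_i lambda_i) times that maximum. *)

Section PointwiseBounds.
Variables (R : realDomainType) (I : finType).
Local Open Scope ereal_scope.

Lemma bigmaxe_le_sume (f : I -> \bar R) :
  (forall i, 0 <= f i) -> \big[maxe/-oo]_i f i <= \sum_i f i.
Proof.
move=> f_ge0; apply: bigmax_le => [|j _]; first exact: leNye.
rewrite (bigD1 j) //=; apply: lee_paddr => //.
by apply: sume_ge0 => i _.
Qed.

Lemma sume_weighted_le_bigmaxe (w : I -> R) (f : I -> \bar R) :
  (forall i, (0 <= w i)%R) ->
  \sum_i (w i)%:E * f i <= (\sum_i w i)%:E * \big[maxe/-oo]_i f i.
Proof.
move=> w_ge0; rewrite -sumEFin ge0_sume_distrl; last by move=> i _; rewrite lee_fin.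
apply: lee_sum => i _; apply: lee_wpmul2l; first by rewrite lee_fin.
exact: (le_bigmax _ f).
Qed.

Lemma bigmin_weight_le_sume (w : I -> R) (m : R) (f : I -> \bar R) :
  (forall i, m <= w i)%R -> (forall i, 0 <= f i) ->
  m%:E * \sum_i f i <= \sum_i (w i)%:E * f i.
Proof.
move=> le_mw f_ge0; rewrite ge0_sume_distrr; last by move=> i _.
by apply: lee_sum => i _; apply: lee_wpmul2r; rewrite ?lee_fin.
Qed.

End PointwiseBounds.

Lemma ereal_inf_le_scale (R : realType) (T : Type) (A : set T)
    (F G : T -> \bar R) (a : R) :
  0 <= a -> (forall y, A y -> (a%:E * F y <= G y)%E) ->
  (a%:E * ereal_inf (F @` A) <= ereal_inf (G @` A))%E.
Proof.
move=> a_ge0 le_FG; apply/ereal_infP => _ [y Ay <-].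
apply: le_trans (le_FG y Ay); apply: lee_wpmul2l; first by rewrite lee_fin.
by apply: ereal_inf_lbound; exists y.
Qed.

Theorem proposition2p8 (R : realType) (n k : nat) (hk : (0 < k)%N)
  (phi : 'I_k -> 'rV[R]_n -> \bar R) (lambda : 'I_k -> R)
  (hcvx : forall i, ecvx_fun (phi i))
  (hnn : forall i x, (0 <= phi i x)%E)
  (hlam : forall i, 0 < lambda i) :
  forall x : 'rV[R]_n,
    (((\sum_(i < k) lambda i)^-1)%:E * g1 lambda phi x <= g2 lambda phi x)%E /\
    (g2 lambda phi x
       <= ((\big[Num.min/lambda (Ordinal hk)]_(i < k) lambda i)^-1)%:E
          * g1 lambda phi x)%E.
Proof.
move=> x; have lam_ge0 i : 0 <= lambda i by exact/ltW.
set L := \sum_(i < k) lambda i.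
set m := \big[Num.min/lambda (Ordinal hk)]_(i < k) lambda i.
have L_gt0 : 0 < L.
  by rewrite /L (bigD1 (Ordinal hk)) //= ltr_pwDl // sumr_ge0.
have m_gt0 : 0 < m by apply/bigmin_gtP; split.
split.
- apply: ereal_inf_le_scale; first by rewrite invr_ge0 ltW.
  move=> y _; rewrite lee_pdivrMl //.
  exact: sume_weighted_le_bigmaxe.
- rewrite lee_pdivlMl //; apply: ereal_inf_le_scale; first exact: ltW.
  move=> y _; have m_le i : m <= lambda i by exact: bigmin_le.
  have phi_y_ge0 i : (0 <= phi i (y i))%E by [].
  apply: le_trans _ (bigmin_weight_le_sume m_le phi_y_ge0).
  by apply: lee_wpmul2l; [rewrite lee_fin ltW | exact: bigmaxe_le_sume].
Qed.
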